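(* Let $k=(k_s)_{s\geq1}$ be a sequence of nonnegative integers and $l=(l_s)$, $m=(m_s)$ sequences with values in $\mathbb{Z}_{\geq2}\cup\{\infty\}$ and $\mathbb{Z}_{\geq1}\cup\{\infty\}$ respectively, such that $2k_s<m_s$ for all $s$. Let $\Delta=\Delta(k,l,m)$ be the subgroup of $\prod_s \mathbb{Z}/m_s\mathbb{Z}\wr D_{l_s}$ generated (and marked) by the three sequences $\tau=(\tau_s)$, $\alpha=(\alpha_s)$, $\beta=(\beta_s)$, where $\tau_s=(+1,\mathbb{1})$, $\alpha_s=(0,a_s\delta_0)$, $\beta_s=(0,b_s\delta_{k_s})$. If $R<\frac{\min_s k_s-1}{2}$, then the marked balls of radius $R$ in $\Delta$ and in $\Gamma(0,2,\infty)$ coincide. Moreover, if the sequence $k$ is unbounded, then $\Gamma(0,2,\infty)$ is a marked quotient of $\Delta$.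
   Context: $D_l=\langle a,b\mid a^2=b^2=(ab)^l=1\rangle$ is the dihedral group of order $2l$ ($D_\infty$ infinite dihedral); $a_s,b_s$ denote these generators in $D_{l_s}$. The wreath product $B\wr L$ has elements $(g,f)$, $g\in B$, $f:B\to L$ finitely supported, with $B$ acting by shift; $\mathbb{1}$ is the trivial function and $c\,\delta_g$ the function equal to $c$ at $g$, trivial elsewhere; $\mathbb{Z}/\infty\mathbb{Z}=\mathbb{Z}$. $\Gamma(0,2,\infty)$ is $\mathbb{Z}\wr D_2$ marked by $(+1,\mathbb{1}),(0,a\delta_0),(0,b\delta_0)$. Marked balls of radius $R$ in two groups marked by ordered triples coincide if a word of length at most $2R$ in the free group on three letters is trivial in one iff it is trivial in the other. A marked group $G$ is a marked quotient of $H$ if the map sending the $i$-th marked generator of $H$ to that of $G$ extends to a surjective homomorphism. *)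

From mathcomp Require Import all_boot all_order all_algebra.
Set Implicit Arguments. Unset Strict Implicit. Unset Printing Implicit Defensive.
Import Order.TTheory GRing.Theory Num.Theory.
Local Open Scope ring_scope.

(** Values in Z_{>=1} u {oo}: [Some n] is n, [None] is infinity. *)
Definition extnat := option nat.

(** The modulus used to represent Z/xZ inside int: n for [Some n], and 0 for
    infinity (Z/0Z = Z; note (z %% 0)%Z = z). *)
Definition emod (x : extnat) : int := if x is Some n then n%:Z else 0.

(** ** The dihedral group D_l = <a,b | a^2 = b^2 = (ab)^l = 1>, l in Z_{>=2} u {oo}.
    Concrete model: the pair (i, e) stands for r^i a^e with r = ab,
    i taken modulo l (i in Z when l = oo).  One has a r a = r^{-1}. *)
Definition dih := (int * bool)%type.

Definition dih_one : dih := (0, false).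

Definition dih_mul (l : extnat) (x y : dih) : dih :=
  (((x.1 + (if x.2 then - y.1 else y.1)) %% emod l)%Z, x.2 (+) y.2).

Definition dih_inv (l : extnat) (x : dih) : dih :=
  if x.2 then ((x.1 %% emod l)%Z, true) else (((- x.1) %% emod l)%Z, false).

(** generators: a = r^0 a, b = a r = r^{-1} a *)
Definition dih_a : dih := (0, true).
Definition dih_b (l : extnat) : dih := (((-1) %% emod l)%Z, true).

Definition dih_trivial (l : extnat) (x : dih) : Prop :=
  (x.1 %% emod l)%Z = 0 /\ x.2 = false.

(** An element (g, f) has g in Z/mZ (an int
    taken modulo m) and f : Z/mZ -> D_l, represented as an m-periodic function
    on int. *)
Definition wr := (int * (int -> dih))%type.

Definition wr_one : wr := (0, fun _ => dih_one).

Definition wr_mul (l m : extnat) (u v : wr) : wr :=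
  (((u.1 + v.1) %% emod m)%Z, fun x => dih_mul l (u.2 x) (v.2 (x - u.1))).

Definition wr_inv (l m : extnat) (u : wr) : wr :=
  (((- u.1) %% emod m)%Z, fun x => dih_inv l (u.2 (x + u.1))).

Definition wr_trivial (l m : extnat) (u : wr) : Prop :=
  (u.1 %% emod m)%Z = 0 /\ forall x : int, dih_trivial l (u.2 x).

Definition wr_delta (m : extnat) (c : dih) (j : int) : int -> dih :=
  fun x => if ((x - j) %% emod m)%Z == 0 then c else dih_one.

Definition gen_tau (m : extnat) : wr := ((1 %% emod m)%Z, fun _ => dih_one).
Definition gen_alpha (m : extnat) : wr := (0, wr_delta m dih_a 0).
Definition gen_beta (k : nat) (l m : extnat) : wr := (0, wr_delta m (dih_b l) k%:Z).

Definition gen (k : nat) (l m : extnat) (i : 'I_3) : wr :=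
  match val i with
  | 0 => gen_tau m
  | 1 => gen_alpha m
  | _ => gen_beta k l m
  end.

(** ** Words in the free group on three letters: a letter is (i, inverted?). *)
Definition word := seq ('I_3 * bool).

Definition letter_eval (k : nat) (l m : extnat) (p : 'I_3 * bool) : wr :=
  if p.2 then wr_inv l m (gen k l m p.1) else gen k l m p.1.

Definition word_eval (k : nat) (l m : extnat) (w : word) : wr :=
  foldr (fun p acc => wr_mul l m (letter_eval k l m p) acc) wr_one w.

(** A marked group is encoded by its set of trivial words. *)
Definition marked := word -> Prop.

Definition W (k : nat) (l m : extnat) : marked :=
  fun w => wr_trivial l m (word_eval k l m w).

Definition Delta (k : nat -> nat) (l m : nat -> extnat) : marked :=
  fun w => forall s, W (k s) (l s) (m s) w.

Definition Gamma0 : marked := W 0 (Some 2%N) None.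

(** G is a marked quotient of H: the generator map extends to a (necessarily
    surjective) homomorphism H -> G, i.e. every relation of H holds in G. *)
Definition marked_quotient (G H : marked) : Prop := forall w, H w -> G w.

From mathcomp Require Import all_boot all_order all_algebra.
From mathcomp Require Import zify ring lra.
Import Order.TTheory GRing.Theory Num.Theory.
Set Implicit Arguments. Unset Strict Implicit. Unset Printing Implicit Defensive.
Local Open Scope ring_scope.

(** Read a word from left to right: the letters tau^{+-1} move a cursor, and
    each letter alpha^{+-1} (resp. beta^{+-1}) toggles the lamp at the cursor
    (resp. at distance k to its right).  In Z/mZ wr D_l with 2k < m, the
    positions visited by a word of length < k lie in a window too narrow for
    any lamp to receive both an alpha and a beta, so the lamp at x is a, b or 1
    according to the parities of the numbers of alpha and of beta toggles it
    receives; the word is trivial iff the cursor comes back to 0 mod m and all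
    these parities are even.  The same count describes Z wr D_2, where a and b
    commute, and since all positions of the word are closer than k <= m/2,
    counting modulo m or in Z gives the same answer. *)

Definition letter_shift (p : 'I_3 * bool) : int :=
  if val p.1 == 0%N then (if p.2 then -1 else 1) else 0.

Definition word_shift (w : word) : int := \sum_(p <- w) letter_shift p.

Definition letter_event (p : 'I_3 * bool) (t : bool) : bool :=
  val p.1 == (if t then 2 else 1)%N.

(* [(c, false)], resp. [(c, true)], records a letter alpha^{+-1}, resp.
   beta^{+-1}, read while the cursor is at c. *)
Fixpoint lamp_events (w : word) : seq (int * bool) :=
  if w is p :: w' then
    if val p.1 == 0%N then [seq (e.1 + letter_shift p, e.2) | e <- lamp_events w']
    else (0, val p.1 == 2%N) :: lamp_events w'
  else [::].

Definition lamp_count (M : int) (t : bool) (x : int) (w : word) : nat :=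
  count (fun e => (e.2 == t) && (x == e.1 %[mod M])%Z) (lamp_events w).

Lemma lamp_count_cons M t x p w :
  lamp_count M t x (p :: w) =
  ((letter_event p t && (x == 0 %[mod M])%Z) + lamp_count M t (x - letter_shift p) w)%N.
Proof.
rewrite /lamp_count /letter_event /letter_shift.
case: p => [[[|[|[|i]]] Hi] inv] //=; last 2 first.
- by case: t; rewrite subr0.
- by case: t; rewrite subr0.
rewrite count_map (_ : (0 == _) = false) ?add0n; last by case: t.
apply: eq_count => e /=; congr andb.
set d : int := if inv then -1 else 1.
by rewrite !eqz_mod_dvd; have -> : x - (e.1 + d) = x - d - e.1 by ring.
Qed.

Lemma lamp_count_congr M t x y w :
  (x == y %[mod M])%Z -> lamp_count M t x w = lamp_count M t y w.
Proof. by move=> /eqP hxy; apply: eq_count => e; rewrite hxy. Qed.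

Lemma lamp_count_gt0 M t x w : (0 < lamp_count M t x w)%N ->
  exists2 c, (c, t) \in lamp_events w & (x == c %[mod M])%Z.
Proof.
rewrite -has_count => /hasP [[c t'] he /andP [/eqP /= ht hxc]].
by exists c; rewrite -?ht.
Qed.

(* Beta toggles the lamp k to the right of the cursor, whence [x - k]. *)
Definition unmixed (M : int) (k : nat) (w : word) : Prop :=
  forall x, (lamp_count M false x w == 0)%N || (lamp_count M true (x - k%:Z) w == 0)%N.

Lemma unmixed_cons M k p w : unmixed M k (p :: w) -> unmixed M k w.
Proof.
move=> h x; move: (h (x + letter_shift p)); rewrite !lamp_count_cons !addn_eq0 addrK.
have -> : x + letter_shift p - k%:Z - letter_shift p = x - k%:Z by ring.
by case/orP => /andP [_ ->]; rewrite ?orbT.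
Qed.

Definition lamp_of (l : extnat) (pa pb : bool) : dih :=
  if pa then dih_a else if pb then dih_b l else dih_one.

Lemma dih_mul_lamp_of l (pa pb : bool) (na nb : nat) :
  (pa + na == 0)%N || (pb + nb == 0)%N ->
  dih_mul l (lamp_of l pa pb) (lamp_of l (odd na) (odd nb)) =
  lamp_of l (odd (pa + na)) (odd (pb + nb)).
Proof.
move=> hmix; rewrite !oddD !oddb.
have {hmix} : ~~ ((pa || odd na) && (pb || odd nb)).
  case/orP: hmix; rewrite addn_eq0 => /andP [/eqP h0 /eqP ->];
  by case: pa pb h0 => [] [] //= _; rewrite ?andbF.
case: pa pb (odd na) (odd nb) => [] [] [] [] //= _;
by rewrite /dih_mul /= ?subrr ?oppr0 ?addr0 ?add0r ?mod0z ?modz_mod.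
Qed.

Lemma dih_trivial_lamp_of l pa pb : dih_trivial l (lamp_of l pa pb) <-> ~~ pa /\ ~~ pb.
Proof. by case: pa pb => [] []; rewrite /dih_trivial /= ?mod0z; split => [[]|[]]. Qed.

(* a^pa b^pb = r^pb a^(pa + pb) in D_2. *)
Definition lamp_D2 (pa pb : bool) : dih := (pb%:Z, pa (+) pb).

Lemma lamp_of_D2 pa pb : ~~ (pa && pb) -> lamp_of (Some 2%N) pa pb = lamp_D2 pa pb.
Proof. by case: pa pb => [] []. Qed.

Lemma dih_mul_lamp_D2 pa pb qa qb :
  dih_mul (Some 2%N) (lamp_D2 pa pb) (lamp_D2 qa qb) = lamp_D2 (pa (+) qa) (pb (+) qb).
Proof. by case: pa pb qa qb => [] [] [] []. Qed.

Lemma dih_trivial_lamp_D2 pa pb : dih_trivial (Some 2%N) (lamp_D2 pa pb) <-> ~~ pa /\ ~~ pb.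
Proof. by case: pa pb => [] [] //=; split => [[]|[]]. Qed.

Lemma letter_eval_fst k l m p :
  (letter_eval k l m p).1 = (letter_shift p %% emod m)%Z.
Proof.
case: p => [[[|[|[|i]]] Hi] [|]] //=; rewrite ?oppr0 ?mod0z //.
by rewrite modzNm.
Qed.

Lemma letter_eval_snd k l m p x :
  (letter_eval k l m p).2 x =
  lamp_of l (letter_event p false && (x == 0 %[mod emod m])%Z)
            (letter_event p true && (x - k%:Z == 0 %[mod emod m])%Z).
Proof.
rewrite /letter_eval /gen /letter_event mod0z.
case: p => [[[|[|[|i]]] Hi] [|]] //=; rewrite /wr_delta ?addr0 ?subr0;
  try case: ifP => _; by rewrite /dih_inv /= ?oppr0 ?mod0z ?modz_mod.
Qed.

Lemma word_eval_cons k l m p w :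
  word_eval k l m (p :: w) = wr_mul l m (letter_eval k l m p) (word_eval k l m w).
Proof. by []. Qed.

Lemma word_eval_fst k l m w : (word_eval k l m w).1 = (word_shift w %% emod m)%Z.
Proof.
elim: w => [|p w IH]; first by rewrite /word_shift big_nil mod0z.
by rewrite word_eval_cons /= IH letter_eval_fst modzDml modzDmr /word_shift big_cons.
Qed.

Lemma word_eval_snd_unmixed k l m w x : unmixed (emod m) k w ->
  (word_eval k l m w).2 x =
  lamp_of l (odd (lamp_count (emod m) false x w))
            (odd (lamp_count (emod m) true (x - k%:Z) w)).
Proof.
set M := emod m; elim: w x => [|p w IH] x hw; first by [].
set s := letter_shift p; have hcons := lamp_count_cons M _ _ p w.
rewrite word_eval_cons /= letter_eval_snd !(IH _ (unmixed_cons hw)) !hcons.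
have shiftE y : (y - (letter_eval k l m p).1 == y - s %[mod M])%Z.
  by rewrite letter_eval_fst -modzDmr modzNm modzDmr.
rewrite (addrAC x) !(lamp_count_congr _ _ (shiftE _)).
by apply: dih_mul_lamp_of; move: (hw x); rewrite !hcons.
Qed.

Lemma word_eval_Gamma0_snd w x :
  (word_eval 0 (Some 2%N) None w).2 x =
  lamp_D2 (odd (lamp_count 0 false x w)) (odd (lamp_count 0 true x w)).
Proof.
elim: w x => [|p w IH] x; first by [].
rewrite word_eval_cons /= letter_eval_snd IH letter_eval_fst !lamp_count_cons.
rewrite lamp_of_D2 ?dih_mul_lamp_D2 ?oddD ?oddb ?subr0 ?modz0 //.
by rewrite /letter_event /=; case: (val p.1 =P 1%N) => [->|] //; rewrite andbF.
Qed.

Definition balanced (M : int) (w : word) : Prop :=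
  (M %| word_shift w)%Z /\ forall t x, ~~ odd (lamp_count M t x w).

Lemma W_balanced k l m w : unmixed (emod m) k w -> W k l m w <-> balanced (emod m) w.
Proof.
move=> hw; rewrite /W /wr_trivial word_eval_fst modz_mod.
split=> [[/dvdz_mod0P hS hL] | [/dvdz_mod0P hS hL]]; split=> //.
- move=> t x; case: t.
    by move: (hL (x + k%:Z)); rewrite word_eval_snd_unmixed // addrK => /dih_trivial_lamp_of [].
  by move: (hL x); rewrite word_eval_snd_unmixed // => /dih_trivial_lamp_of [].
- by move=> x; rewrite word_eval_snd_unmixed //; apply/dih_trivial_lamp_of.
Qed.

Lemma Gamma0_balanced w : Gamma0 w <-> balanced 0 w.
Proof.
rewrite /Gamma0 /W /balanced /wr_trivial word_eval_fst /= !modz0 dvd0z.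
split=> [[/eqP hS hL] | [/eqP hS hL]]; split=> //.
- by move=> t x; move: (hL x); rewrite word_eval_Gamma0_snd => /dih_trivial_lamp_D2 []; case: t.
- by move=> x; rewrite word_eval_Gamma0_snd; apply/dih_trivial_lamp_D2.
Qed.

Lemma letter_shift_norm p : `|letter_shift p| <= 1.
Proof. by rewrite /letter_shift; case: ifP; case: p.2. Qed.

Lemma word_shift_norm w : `|word_shift w| <= (size w)%:Z.
Proof.
elim: w => [|p w IH]; first by rewrite /word_shift big_nil.
by move: IH (letter_shift_norm p); rewrite /word_shift big_cons /=; lia.
Qed.

Lemma lamp_events_norm w : {in lamp_events w, forall e : int * bool, `|e.1| < (size w)%:Z}.
Proof.
elim: w => [|p w IH] //=; case: ifP => _ e.
- by case/mapP => e' /IH he' -> /=; have := letter_shift_norm p; lia.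
- by rewrite in_cons => /predU1P [-> | /IH] /=; lia.
Qed.

Lemma lamp_events_dist w :
  {in lamp_events w &, forall e e' : int * bool, `|e.1 - e'.1| < (size w)%:Z}.
Proof.
elim: w => [|p w IH] //=; have hN := @lamp_events_norm w; case: ifP => _ e e'.
- case/mapP => c hc -> /mapP [c' hc' ->] /=; have := IH _ _ hc hc'; lia.
- rewrite !in_cons => /predU1P [-> | he] /predU1P [-> | he'] /=.
  + lia.
  + by have := hN _ he'; lia.
  + by have := hN _ he; lia.
  + by have := IH _ _ he he'; lia.
Qed.

Definition no_small_multiple (M N : int) : Prop :=
  forall z, (M %| z)%Z -> `|z| < N -> z = 0.

Lemma emod_no_small_multiple k m :
  (if m is Some n then (2 * k < n)%N else true) -> no_small_multiple (emod m) (2 * k)%:Z.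
Proof.
case: m => [n|] /= hk z; last by rewrite dvd0z => /eqP.
rewrite dvdzE /= => hdvd hz; apply/eqP; apply: contraT => nz.
have := dvdn_leq _ hdvd; lia.
Qed.

Lemma eqz_mod_small M N x y : no_small_multiple M N ->
  `|x - y| < N -> (x == y %[mod M])%Z = (x == y).
Proof.
move=> hM hxy; rewrite eqz_mod_dvd -subr_eq0.
by apply/idP/eqP => [/hM -> // | ->]; rewrite dvdz0.
Qed.

Section SmallWindow.

Variables (M N : int) (w : word).
Hypothesis hM : no_small_multiple M N.
Hypothesis hw : {in lamp_events w &, forall e e' : int * bool, `|e.1 - e'.1| < N}.

Lemma lamp_count_mod_small (t t' : bool) (c : int) :
  (c, t') \in lamp_events w -> lamp_count M t c w = lamp_count 0 t c w.
Proof.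
move=> hc; apply: eq_in_count => e he /=.
by rewrite !modz0 (eqz_mod_small hM) //; exact: hw _ _ hc he.
Qed.

Lemma even_lamps_mod_small t :
  (forall x, ~~ odd (lamp_count M t x w)) <-> (forall x, ~~ odd (lamp_count 0 t x w)).
Proof.
split=> heven x; apply/negP => hodd; have [c hc hxc] := lamp_count_gt0 (odd_gt0 hodd).
- move: hxc hodd; rewrite !modz0 => /eqP ->.
  by rewrite -(lamp_count_mod_small _ hc) (negPf (heven c)).
- move: hodd; rewrite (lamp_count_congr _ _ hxc) (lamp_count_mod_small _ hc).
  by rewrite (negPf (heven c)).
Qed.

Lemma balanced_mod_small : `|word_shift w| < N -> balanced M w <-> balanced 0 w.
Proof.
move=> hS; rewrite /balanced dvd0z; split=> [[/hM -> // heven] | [/eqP -> heven]].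
  by split=> // t; apply/even_lamps_mod_small.
by rewrite dvdz0; split=> // t; apply/even_lamps_mod_small.
Qed.

End SmallWindow.

Lemma unmixed_small M k w : no_small_multiple M (2 * k)%:Z ->
  {in lamp_events w &, forall e e' : int * bool, `|e.1 - e'.1| < k%:Z} ->
  unmixed M k w.
Proof.
move=> hM hw x; rewrite !eqn0Ngt.
have [/lamp_count_gt0 [c hc hxc] | //] := ltnP 0 (lamp_count M false x w).
have [/lamp_count_gt0 [c' hc' hxc'] | //] := ltnP 0 (lamp_count M true (x - k%:Z) w).
have hdvd : (M %| c - k%:Z - c')%Z.
  move: hxc hxc'; rewrite !eqz_mod_dvd => h h'.
  have -> : c - k%:Z - c' = (x - k%:Z - c') - (x - c) by ring.
  exact: rpredB.
have /= hcc' := hw _ _ hc hc'.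
by move: (hM _ hdvd) hcc'; clear -c c' k; lia.
Qed.

Lemma W_iff_Gamma0 k l m w : (if m is Some n then (2 * k < n)%N else true) ->
  (size w < k)%N -> W k l m w <-> Gamma0 w.
Proof.
move=> hkm hwk; have hM := emod_no_small_multiple hkm.
have hdist : {in lamp_events w &, forall e e' : int * bool, `|e.1 - e'.1| < k%:Z}.
  by move=> e e' he he'; have := lamp_events_dist he he'; lia.
rewrite (W_balanced l (unmixed_small hM hdist)) Gamma0_balanced; apply: (balanced_mod_small hM).
- by move=> e e' he he'; have := hdist _ _ he he'; lia.
- by have := word_shift_norm w; lia.
Qed.

Theorem lemma2p3 (k : nat -> nat) (l m : nat -> extnat)
  (hl : forall s, if l s is Some n then (2 <= n)%N else true)
  (hm : forall s, if m s is Some n then (1 <= n)%N else true)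
  (hkm : forall s, if m s is Some n then (2 * k s < n)%N else true) :
  (forall (F : realFieldType) (R : F),
     (forall s, R < ((k s)%:R - 1) / 2) ->
     forall w : word, (size w)%:R <= 2 * R ->
       (Delta k l m w <-> Gamma0 w))
  /\ ((forall N : nat, exists s, (N < k s)%N) ->
      marked_quotient Gamma0 (Delta k l m)).
Proof.
split=> [F R hR w hw | hunb w hD].
- have hwk s : (size w < k s)%N.
    have : (size w)%:R + 1 < (k s)%:R :> F by have := hR s; lra.
    by rewrite natr1 ltr_nat => /ltnW.
  split=> [hD | hG s].
  + exact/(W_iff_Gamma0 _ (hkm 0%N) (hwk 0%N))/hD.
  + exact/(W_iff_Gamma0 _ (hkm s) (hwk s)).
- have [s hs] := hunb (size w).
  exact/(W_iff_Gamma0 _ (hkm s) hs)/hD.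
Qed.
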